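(* If $\Gamma\vdash t:\tau$ and $t\to t'$, then $\Gamma\vdash t':\tau$.
   Context: Types: $\rho,\tau::=\Diamond\mid\mathbf{B}\mid\tau\multimap\rho\mid\tau\otimes\rho\mid\tau\times\rho\mid\mathbf{L}(\tau)$. Raw terms: $r,s,t::=x^\tau\mid c\mid\lambda x^\tau.\,t\mid\langle t,s\rangle\mid ts\mid\{t\}$, where each variable $x^\tau$ carries a type (infinitely many variables of each type), application associates to the left, terms are identified up to renaming of bound variables ($\lambda$ is the only binder), and the constants $c$ with their types are $\mathsf{tt},\mathsf{ff}:\mathbf{B}$; $\mathsf{nil}_\tau:\mathbf{L}(\tau)$; $\mathsf{cons}_\tau:\Diamond\multimap\tau\multimap\mathbf{L}(\tau)\multimap\mathbf{L}(\tau)$; $\otimes_{\tau,\rho}:\tau\multimap\rho\multimap\tau\otimes\rho$. A context is a finite set of typed variables; $\Gamma_1,\Gamma_2$ denotes $\Gamma_1\cup\Gamma_2$ and presupposes $\Gamma_1\cap\Gamma_2=\emptyset$; $x^\tau$ also denotes $\{x^\tau\}$. The relation $\Gamma\vdash t:\tau$ is inductively defined by: (Var) $\Gamma,x^\tau\vdash x:\tau$; (Const) $\Gamma\vdash c:\tau$ for a constant $c$ of type $\tau$; ($\multimap^+$) from $\Gamma\cup\{x^\tau\}\vdash t:\rho$ infer $\Gamma\vdash\lambda x^\tau.t:\tau\multimap\rho$; ($\multimap^-$) from $\Gamma_1\vdash t:\tau\multimap\rho$ and $\Gamma_2\vdash s:\tau$ infer $\Gamma_1,\Gamma_2\vdash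 ts:\rho$; ($\times^+$) from $\Gamma\vdash t:\tau$ and $\Gamma\vdash s:\rho$ infer $\Gamma\vdash\langle t,s\rangle:\tau\times\rho$; ($\times^-_1$) from $\Gamma\vdash t:\tau\times\rho$ infer $\Gamma\vdash t\,\mathsf{tt}:\tau$; ($\times^-_0$) from $\Gamma\vdash t:\tau\times\rho$ infer $\Gamma\vdash t\,\mathsf{ff}:\rho$; ($\mathbf{B}^-$) from $\Gamma_1\vdash t:\mathbf{B}$, $\Gamma_2\vdash s:\tau$, $\Gamma_2\vdash r:\tau$ infer $\Gamma_1,\Gamma_2\vdash t\langle s,r\rangle:\tau$; ($\otimes^-$) from $\Gamma_1\vdash t:\tau\otimes\rho$ and $\Gamma_2,x^\tau,y^\rho\vdash s:\sigma$ infer $\Gamma_1,\Gamma_2\vdash t(\lambda x^\tau.\lambda y^\rho.s):\sigma$; ($\mathbf{L}^-$) from $\Gamma\vdash t:\mathbf{L}(\tau)$ and $\emptyset\vdash s:\Diamond\multimap\tau\multimap\rho\multimap\rho$ infer $\Gamma\vdash t\{s\}:\rho\multimap\rho$. Lists: a list with $n$ entries ($n\ge0$) is a term $\mathsf{cons}_\tau d_1a_1(\mathsf{cons}_\tau d_2a_2(\cdots(\mathsf{cons}_\tau d_na_n\,\mathsf{nil}_\tau)\cdots))$ where the $d_i$ are arbitrary terms of type $\Diamond$ and the $a_i$ arbitrary terms of type $\tau$ (for $n=0$ this is $\mathsf{nil}_\tau$). Conversions $\mapsto$: $(\lambda x.t)s\mapsto t[s/x]$; $\langle t,s\rangle\mathsf{tt}\mapsto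 t$; $\langle t,s\rangle\mathsf{ff}\mapsto s$; $\mathsf{tt}\langle t,s\rangle\mapsto t$; $\mathsf{ff}\langle t,s\rangle\mapsto s$; $\otimes_{\tau,\rho}ts(\lambda x^\tau.\lambda y^\rho.r)\mapsto r[t,s/x,y]$ (simultaneous substitution); $\mathsf{nil}_\tau\{t\}s\mapsto s$; $\mathsf{cons}_\tau d\,a\,\ell\{t\}s\mapsto t\,d\,a\,(\ell\{t\}s)$ provided $\ell$ is a list. The reduction relation $\to$ is inductively defined by: if $t\mapsto t'$ then $t\to t'$; if $t\to t'$ then $ts\to t's$; if $s\to s'$ then $ts\to ts'$ (so there is no reduction under $\lambda$, inside pairs $\langle\cdot,\cdot\rangle$, or inside braces $\{\cdot\}$). *)

From HB Require Import structures.
From mathcomp Require Import all_boot.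
From mathcomp Require Import finmap.

Set Implicit Arguments.
Unset Strict Implicit.
Unset Printing Implicit Defensive.

Local Open Scope fset_scope.

(* Types  rho, tau ::= Diamond | B | tau -o rho | tau (x) rho | tau x rho | L(tau) *)
Inductive ty : Type :=
  | TDiamond : ty
  | TBool : ty
  | TArr : ty -> ty -> ty
  | TTensor : ty -> ty -> ty
  | TProd : ty -> ty -> ty
  | TList : ty -> ty.

Fixpoint ty_enc (t : ty) : GenTree.tree nat :=
  match t with
  | TDiamond => GenTree.Node 0 [::]
  | TBool => GenTree.Node 1 [::]
  | TArr a b => GenTree.Node 2 [:: ty_enc a; ty_enc b]
  | TTensor a b => GenTree.Node 3 [:: ty_enc a; ty_enc b]
  | TProd a b => GenTree.Node 4 [:: ty_enc a; ty_enc b]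
  | TList a => GenTree.Node 5 [:: ty_enc a]
  end.

Fixpoint ty_dec (t : GenTree.tree nat) : option ty :=
  match t with
  | GenTree.Node 0 [::] => Some TDiamond
  | GenTree.Node 1 [::] => Some TBool
  | GenTree.Node 2 [:: a; b] =>
      if (ty_dec a, ty_dec b) is (Some a', Some b') then Some (TArr a' b') else None
  | GenTree.Node 3 [:: a; b] =>
      if (ty_dec a, ty_dec b) is (Some a', Some b') then Some (TTensor a' b') else None
  | GenTree.Node 4 [:: a; b] =>
      if (ty_dec a, ty_dec b) is (Some a', Some b') then Some (TProd a' b') else None
  | GenTree.Node 5 [:: a] =>
      if ty_dec a is Some a' then Some (TList a') else None
  | _ => None
  end.

Lemma ty_encK : pcancel ty_enc ty_dec.
Proof. by elim=> //= [a -> b ->|a -> b ->|a -> b ->|a ->]. Qed.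

HB.instance Definition _ := Countable.copy ty (pcan_type ty_encK).

(* A typed variable x^tau : a name together with its type.  There are
   infinitely many variables of each type. *)
Definition var := (nat * ty)%type.
Definition vty (x : var) : ty := x.2.

Definition ctx := {fset var}.

Inductive const : Type :=
  | Ctt : const
  | Cff : const
  | Cnil : ty -> const
  | Ccons : ty -> const
  | Ctens : ty -> ty -> const.

Definition const_ty (c : const) : ty :=
  match c with
  | Ctt => TBool
  | Cff => TBool
  | Cnil t => TList t
  | Ccons t => TArr TDiamond (TArr t (TArr (TList t) (TList t)))
  | Ctens t r => TArr t (TArr r (TTensor t r))
  end.

(* Raw terms up to renaming of bound variables, in locally nameless
   representation: bound variables are de Bruijn indices (BVar), free
   variables are typed names (FVar).  The binder Lam carries the type
   of the bound variable.  lam x t below is the paper's  \x^tau. t . *)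
Inductive term : Type :=
  | BVar : nat -> term
  | FVar : var -> term
  | Const : const -> term
  | Lam : ty -> term -> term
  | Pair : term -> term -> term
  | App : term -> term -> term
  | Brace : term -> term.

Fixpoint close_rec (k : nat) (x : var) (t : term) : term :=
  match t with
  | BVar n => BVar n
  | FVar y => if y == x then BVar k else FVar y
  | Const c => Const c
  | Lam a b => Lam a (close_rec k.+1 x b)
  | Pair a b => Pair (close_rec k x a) (close_rec k x b)
  | App a b => App (close_rec k x a) (close_rec k x b)
  | Brace a => Brace (close_rec k x a)
  end.

Definition lam (x : var) (t : term) : term := Lam (vty x) (close_rec 0 x t).

Fixpoint open_rec (k : nat) (u : term) (t : term) : term :=
  match t with
  | BVar n => if n == k then u else BVar n
  | FVar y => FVar y
  | Const c => Const c
  | Lam a b => Lam a (open_rec k.+1 u b)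
  | Pair a b => Pair (open_rec k u a) (open_rec k u b)
  | App a b => App (open_rec k u a) (open_rec k u b)
  | Brace a => Brace (open_rec k u a)
  end.

(* simultaneous substitution: index k+1 (outer binder) := u1, index k := u2 *)
Fixpoint open2_rec (k : nat) (u1 u2 : term) (t : term) : term :=
  match t with
  | BVar n => if n == k.+1 then u1 else if n == k then u2 else BVar n
  | FVar y => FVar y
  | Const c => Const c
  | Lam a b => Lam a (open2_rec k.+1 u1 u2 b)
  | Pair a b => Pair (open2_rec k u1 u2 a) (open2_rec k u1 u2 b)
  | App a b => App (open2_rec k u1 u2 a) (open2_rec k u1 u2 b)
  | Brace a => Brace (open2_rec k u1 u2 a)
  end.

(* The typing relation  Gamma |- t : tau .  Gamma1,Gamma2 is the union of
   two disjoint contexts. *)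
Inductive typing : ctx -> term -> ty -> Prop :=
  | T_Var (G : ctx) (x : var) :
      x \notin G -> typing (x |` G) (FVar x) (vty x)
  | T_Const (G : ctx) (c : const) :
      typing G (Const c) (const_ty c)
  | T_Lam (G : ctx) (x : var) (t : term) (r : ty) :
      typing (G `|` [fset x]) t r ->
      typing G (lam x t) (TArr (vty x) r)
  | T_App (G1 G2 : ctx) (t s : term) (a r : ty) :
      G1 `&` G2 = fset0 ->
      typing G1 t (TArr a r) -> typing G2 s a ->
      typing (G1 `|` G2) (App t s) r
  | T_Pair (G : ctx) (t s : term) (a r : ty) :
      typing G t a -> typing G s r -> typing G (Pair t s) (TProd a r)
  | T_Fst (G : ctx) (t : term) (a r : ty) :
      typing G t (TProd a r) -> typing G (App t (Const Ctt)) a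
  | T_Snd (G : ctx) (t : term) (a r : ty) :
      typing G t (TProd a r) -> typing G (App t (Const Cff)) r
  | T_If (G1 G2 : ctx) (t s u : term) (a : ty) :
      G1 `&` G2 = fset0 ->
      typing G1 t TBool -> typing G2 s a -> typing G2 u a ->
      typing (G1 `|` G2) (App t (Pair s u)) a
  | T_TensElim (G1 G2 : ctx) (t s : term) (x y : var) (c : ty) :
      G1 `&` G2 = fset0 -> x \notin G2 -> y \notin G2 -> x != y ->
      typing G1 t (TTensor (vty x) (vty y)) ->
      typing (G2 `|` [fset x; y]) s c ->
      typing (G1 `|` G2) (App t (lam x (lam y s))) c
  | T_ListElim (G : ctx) (t s : term) (a r : ty) :
      typing G t (TList a) ->
      typing fset0 s (TArr TDiamond (TArr a (TArr r r))) ->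
      typing G (App t (Brace s)) (TArr r r).

Inductive is_list (a : ty) : term -> Prop :=
  | L_nil : is_list a (Const (Cnil a))
  | L_cons (d e l : term) :
      (exists G, typing G d TDiamond) ->
      (exists G, typing G e a) ->
      is_list a l ->
      is_list a (App (App (App (Const (Ccons a)) d) e) l).

Inductive conv : term -> term -> Prop :=
  | C_beta (a : ty) (b s : term) :
      conv (App (Lam a b) s) (open_rec 0 s b)
  | C_fst (t s : term) : conv (App (Pair t s) (Const Ctt)) t
  | C_snd (t s : term) : conv (App (Pair t s) (Const Cff)) s
  | C_iftt (t s : term) : conv (App (Const Ctt) (Pair t s)) t
  | C_ifff (t s : term) : conv (App (Const Cff) (Pair t s)) s
  | C_tens (a r : ty) (t s u : term) :
      conv (App (App (App (Const (Ctens a r)) t) s) (Lam a (Lam r u)))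
           (open2_rec 0 t s u)
  | C_nil (a : ty) (t s : term) :
      conv (App (App (Const (Cnil a)) (Brace t)) s) s
  | C_cons (a : ty) (d e l t s : term) :
      is_list a l ->
      conv (App (App (App (App (App (Const (Ccons a)) d) e) l) (Brace t)) s)
           (App (App (App t d) e) (App (App l (Brace t)) s)).

(* One-step reduction: no reduction under lambda, in pairs, or in braces. *)
Inductive red : term -> term -> Prop :=
  | R_conv (t t' : term) : conv t t' -> red t t'
  | R_appl (t t' s : term) : red t t' -> red (App t s) (App t' s)
  | R_appr (t s s' : term) : red s s' -> red (App t s) (App t s').

(* Typing only depends on the free variables of a term: a derivation in G
   yields one in every context containing fv t.  This turns the disjoint
   context splittings of the linear rules into conditions on free variables.
   The core is the substitution lemma: if G, x |- t : rho and D |- s : tau with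
   disjoint free variables, then t[s/x] is typable in their union; binders are
   renamed apart by variable swaps, which preserve typing.  For each conversion
   the typing of the redex is inverted -- the constants cons, nil and (x)
   force the shape of the derivation -- and the contractum is retyped: beta
   and tensor elimination by the substitution lemma, the other conversions by
   recombining the derivations of the subterms. *)

From mathcomp Require Import all_boot finmap zify.

Set Implicit Arguments.
Unset Strict Implicit.
Unset Printing Implicit Defensive.

Local Open Scope fset_scope.

(** * Free variables and contexts *)

Fixpoint fv (t : term) : {fset var} :=
  match t with
  | BVar _ | Const _ => fset0
  | FVar y => [fset y]
  | Lam _ b | Brace b => fv b
  | Pair a b | App a b => fv a `|` fv b
  end.

(* [fset_solve] proves inclusions, equalities, disjointness and
   (non-)memberships between finite sets of variables: every set hypothesis is
   instantiated at a generic point (or at the element in question), equalities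
   between variables are decided by substitution, and the resulting boolean
   combination of membership atoms by case analysis with unit propagation. *)

Lemma fsubset_at (A B : {fset var}) w : A `<=` B -> (w \in A) ==> (w \in B).
Proof. by move/fsubsetP => sAB; apply/implyP/sAB. Qed.

Lemma fset_eq_at (A B : {fset var}) w : A = B -> (w \in A) = (w \in B).
Proof. by move->. Qed.

Ltac fset_at w :=
  repeat match goal with
  | H : is_true (fsubset _ _) |- _ => move: (fsubset_at w H); clear H
  | H : _ = _ |- _ => move: (fset_eq_at w H); clear H
  end.

Ltac fset_cases_eq :=
  repeat match goal with
  | H : is_true (~~ (?a == ?a)) |- _ => by rewrite eqxx in H
  | |- context [?a == ?a] => rewrite eqxx /=
  | H : is_true (~~ (?a == ?b)) |- context [?a == ?b] => rewrite (negbTE H) /=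
  | H : is_true (~~ (?a == ?b)) |- context [?b == ?a] => rewrite [b == a]eq_sym (negbTE H) /=
  | |- context [?a == ?b] =>
      case: (eqVneq a b) => [?|?] /=; [first [subst a | subst b] | idtac]
  end.

Ltac fset_rewrite_atom E :=
  repeat match goal with
  | H : is_true _ |- _ => tryif constr_eq H E then fail else move: H
  | H : @eq bool _ _ |- _ => tryif constr_eq H E then fail else move: H
  end;
  rewrite ?E /= ?orbT ?orbF ?andbT ?andbF; clear E; intros.

Ltac fset_unit :=
  match goal with
  | H : is_true true |- _ => clear H
  | H : true = _ |- _ => move/esym: H => H
  | H : false = _ |- _ => move/esym/negbT: H => H
  | H : _ = false |- _ => move/negbT: H => H
  | H : is_true (_ && _) |- _ => case/andP: H => ? ?
  | H : is_true (~~ (_ || _)) |- _ => rewrite negb_or in H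
  | H : is_true (_ \in _) |- _ => fset_rewrite_atom H
  | H : is_true (~~ (_ \in _)) |- _ => move/negbTE: H => H; fset_rewrite_atom H
  end.

Ltac fset_split :=
  match goal with
  | |- context [?a \in ?B] => case: (boolP (a \in B)) => ? /=
  | H : context [?a \in ?B] |- _ => case: (boolP (a \in B)) => ? /=
  end.

Ltac fset_decide :=
  repeat match goal with
  | H : is_true _ |- _ => move: H
  | H : @eq bool _ _ |- _ => move: H
  end;
  cbn [fv]; rewrite ?inE /=; fset_cases_eq; intros;
  repeat (first [ done | fset_unit | fset_split ]).

Ltac fset_solve :=
  let w := fresh "w" in
  solve [ intros; match goal with
          | |- is_true (fsubset _ _) => apply/fsubsetP => w; apply/implyP; fset_at w
          | |- @eq _ _ _ => apply/fsetP => w; fset_at w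
          | |- is_true (?a \in _) => fset_at a
          | |- is_true (~~ (?a \in _)) => fset_at a
          | |- _ => idtac
          end; fset_decide ].

Lemma fv_close k x t : fv (close_rec k x t) = fv t `\ x.
Proof.
elim: t k => [n|y|c|a b IH|a IHa b IHb|a IHa b IHb|a IH] k /=; rewrite ?IH ?IHa ?IHb //;
  try case: eqVneq => [->|] /=; fset_solve.
Qed.

Lemma fv_lam x t : fv (lam x t) = fv t `\ x.
Proof. exact: fv_close. Qed.

Lemma close_fresh k z t : z \notin fv t -> close_rec k z t = t.
Proof.
elim: t k => //= [y|a b IH|a IHa b IHb|a IHa b IHb|a IH] k; rewrite ?inE.
- by rewrite eq_sym => /negPf ->.
- by move=> zb; rewrite IH.
- by case/norP => za zb; rewrite IHa ?IHb.
- by case/norP => za zb; rewrite IHa ?IHb.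
- by move=> za; rewrite IH.
Qed.

Lemma fresh_var (A : {fset var}) (T : ty) : exists2 z : var, z \notin A & vty z = T.
Proof.
exists ((\max_(w <- A) w.1).+1, T) => //; apply/negP => zA.
by have := @leq_bigmax_seq _ (enum_fset A) xpredT (fun w : var => w.1) _ zA isT; rewrite ltnn.
Qed.

Lemma typing_fv G t T : typing G t T -> fv t `<=` G.
Proof.
by elim=> {G t T} //= *; rewrite ?fv_close; fset_solve.
Qed.

Lemma typing_fv_ctx G G' t T : typing G t T -> fv t `<=` G' -> typing G' t T.
Proof.
move=> tyt; elim: tyt G' => {G t T} /=.
- move=> G x _ G' xG'; have x_in : x \in G' by fset_solve.
  by rewrite -(fsetD1K x_in); apply: T_Var; rewrite !inE eqxx.
- by move=> *; apply: T_Const.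
- move=> G x t r _ IH G'; rewrite fv_close => sG'.
  by apply/T_Lam/IH; fset_solve.
- move=> G1 G2 t s a r dG tyt IHt tys IHs G' sG'.
  have ft := typing_fv tyt; have fs := typing_fv tys.
  have -> : G' = (G' `\` fv s) `|` fv s by fset_solve.
  by apply: T_App (IHt _ _) (IHs _ _); fset_solve.
- by move=> G t s a r _ IHt _ IHs G' sG'; apply: T_Pair (IHt _ _) (IHs _ _); fset_solve.
- by move=> G t a r _ IH G' sG'; apply: T_Fst (IH _ _); fset_solve.
- by move=> G t a r _ IH G' sG'; apply: T_Snd (IH _ _); fset_solve.
- move=> G1 G2 t s u a dG tyt IHt tys IHs tyu IHu G' sG'.
  have ft := typing_fv tyt; have fs := typing_fv tys; have fu := typing_fv tyu.
  have -> : G' = (G' `\` (fv s `|` fv u)) `|` (fv s `|` fv u) by fset_solve.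
  by apply: T_If (IHt _ _) (IHs _ _) (IHu _ _); fset_solve.
- move=> G1 G2 t s x y c dG xG2 yG2 xy tyt IHt tys IHs G'.
  rewrite !fv_close => sG'.
  have ft := typing_fv tyt; have fs := typing_fv tys.
  have -> : G' = (G' `\` (fv s `\ y `\ x)) `|` (fv s `\ y `\ x) by fset_solve.
  by apply: T_TensElim (IHt _ _) (IHs _ _) => //; fset_solve.
- by move=> G t s a r _ IH tys _ G' sG'; apply: T_ListElim (IH _ _) tys; fset_solve.
Qed.

Lemma typing_weaken G G' t T : typing G t T -> G `<=` G' -> typing G' t T.
Proof. by move=> tyt sG; apply: typing_fv_ctx tyt (fsubset_trans (typing_fv tyt) sG). Qed.

(** * Inversion and derived rules *)

Lemma typing_ConstE G c T : typing G (Const c) T -> T = const_ty c.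
Proof. by move Ec: (Const c) => t tyt; case: tyt Ec => // ? ? [->]. Qed.

Lemma typing_PairE G t s T : typing G (Pair t s) T ->
  exists a r, [/\ T = TProd a r, typing G t a & typing G s r].
Proof.
by move Ep: (Pair t s) => u tyu; case: tyu Ep => // ? ? ? a r ? ? [-> ->]; exists a, r.
Qed.

Lemma typing_LamE G a b T : typing G (Lam a b) T ->
  exists x t r, [/\ a = vty x, b = close_rec 0 x t, T = TArr (vty x) r
                  & typing (G `|` [fset x]) t r].
Proof.
by move El: (Lam a b) => u tyu; case: tyu El => // ? x t r ? [-> ->]; exists x, t, r.
Qed.

Variant typing_App_spec (G : ctx) (t s : term) (T : ty) : Prop :=
  | TAppArr G1 G2 a of G = G1 `|` G2 & G1 `&` G2 = fset0
      & typing G1 t (TArr a T) & typing G2 s a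
  | TAppFst r of s = Const Ctt & typing G t (TProd T r)
  | TAppSnd a of s = Const Cff & typing G t (TProd a T)
  | TAppIf G1 G2 s1 s2 of s = Pair s1 s2 & G = G1 `|` G2 & G1 `&` G2 = fset0
      & typing G1 t TBool & typing G2 s1 T & typing G2 s2 T
  | TAppTens G1 G2 x y u of s = lam x (lam y u) & G = G1 `|` G2 & G1 `&` G2 = fset0
      & x \notin G2 & y \notin G2 & x != y
      & typing G1 t (TTensor (vty x) (vty y)) & typing (G2 `|` [fset x; y]) u T
  | TAppList s0 a r of s = Brace s0 & T = TArr r r & typing G t (TList a)
      & typing fset0 s0 (TArr TDiamond (TArr a (TArr r r))).

Lemma typing_AppE G t s T : typing G (App t s) T -> typing_App_spec G t s T.
Proof.
move Ea: (App t s) => u tyu; case: tyu Ea => //.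
- by move=> G1 G2 ? ? ? ? dG ty1 ty2 [-> ->]; apply: TAppArr dG ty1 ty2.
- by move=> ? ? ? ? ty1 [-> ->]; apply: TAppFst ty1.
- by move=> ? ? ? ? ty1 [-> ->]; apply: TAppSnd ty1.
- by move=> G1 G2 ? ? ? ? dG ty1 ty2 ty3 [-> ->]; apply: TAppIf dG ty1 ty2 ty3.
- by move=> G1 G2 ? ? ? ? ? dG xG yG xy ty1 ty2 [-> ->]; apply: TAppTens dG xG yG xy ty1 ty2.
- by move=> ? ? ? ? ? ty1 ty2 [-> ->]; apply: TAppList ty1 ty2.
Qed.

Lemma typing_App_fv G G1 G2 t s a r :
  typing G1 t (TArr a r) -> typing G2 s a ->
  fv t `&` fv s = fset0 -> fv t `|` fv s `<=` G -> typing G (App t s) r.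
Proof.
move=> tyt tys dts sG; have -> : G = (G `\` fv s) `|` fv s by fset_solve.
by apply: T_App (typing_fv_ctx tyt _) (typing_fv_ctx tys _); fset_solve.
Qed.

Lemma typing_If_fv G G1 G2 G3 t s u a :
  typing G1 t TBool -> typing G2 s a -> typing G3 u a ->
  fv t `&` (fv s `|` fv u) = fset0 -> fv t `|` (fv s `|` fv u) `<=` G ->
  typing G (App t (Pair s u)) a.
Proof.
move=> tyt tys tyu dt sG.
have -> : G = (G `\` (fv s `|` fv u)) `|` (fv s `|` fv u) by fset_solve.
by apply: T_If (typing_fv_ctx tyt _) (typing_fv_ctx tys _) (typing_fv_ctx tyu _); fset_solve.
Qed.

Lemma lam_vacuous x z t : x \notin fv t -> z \notin fv t -> vty z = vty x ->
  lam x t = lam z t.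
Proof. by move=> xt zt zx; rewrite /lam zx !close_fresh. Qed.

Lemma typing_TensElim_lam G G1 G2 t s x y c : x != y ->
  typing G1 t (TTensor (vty x) (vty y)) -> typing G2 s c ->
  fv t `&` fv (lam x (lam y s)) = fset0 -> fv t `|` fv (lam x (lam y s)) `<=` G ->
  typing G (App t (lam x (lam y s))) c.
Proof.
rewrite !fv_lam => xy tyt tys dt sG; have ft := typing_fv tyt.
have -> : G = (G `\` (fv s `\ y `\ x)) `|` (fv s `\ y `\ x) by fset_solve.
by apply: T_TensElim (typing_fv_ctx tyt _) (typing_fv_ctx tys _); fset_solve.
Qed.

(* If x = y, the outer binder is vacuous and can be renamed apart. *)
Lemma lam2_distinct x y t : exists x', [/\ x' != y, vty x' = vty x
  & lam x (lam y t) = lam x' (lam y t)].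
Proof.
case: (eqVneq x y) => [<-|xy]; last by exists x.
have [z zt zx] := fresh_var (fv t `|` [fset x]) (vty x).
exists z; split=> //; first by fset_solve.
by apply: lam_vacuous => //; rewrite fv_lam; fset_solve.
Qed.

Lemma typing_TensElim_fv G G1 G2 t a b body c :
  typing G1 t (TTensor a b) -> typing G2 (Lam a (Lam b body)) (TArr a (TArr b c)) ->
  fv t `&` fv body = fset0 -> fv t `|` fv body `<=` G ->
  typing G (App t (Lam a (Lam b body))) c.
Proof.
move=> tyt tyL dt sG.
have [x [t1 [r [ax E1 [_ rc] ty1]]]] := typing_LamE tyL; subst a r.
case: t1 E1 ty1 => //= [y|b1 body1]; first by case: ifP.
case=> eb ebody ty1; subst b1 body; clear tyL.
have [y [t2 [r [eb E2 ET ty2]]]] := typing_LamE ty1; subst b body1.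
case: ET => rc; subst r.
have [x' [x'y x'x E]] := lam2_distinct x y t2.
rewrite -[fv (close_rec 1 _ _)]/(fv (lam x (lam y t2))) E in dt sG.
rewrite -[Lam _ (Lam _ _)]/(lam x (lam y t2)) E; rewrite -x'x in tyt.
exact: typing_TensElim_lam x'y tyt ty2 dt sG.
Qed.

(** * Renaming and substitution *)

Fixpoint rename (f : var -> var) (t : term) : term :=
  match t with
  | FVar y => FVar (f y)
  | BVar _ | Const _ => t
  | Lam a b => Lam a (rename f b)
  | Pair a b => Pair (rename f a) (rename f b)
  | App a b => App (rename f a) (rename f b)
  | Brace a => Brace (rename f a)
  end.

Lemma rename_close f k x t : injective f ->
  rename f (close_rec k x t) = close_rec k (f x) (rename f t).
Proof.
move=> f_inj; elim: t k => //= [y|a b IH|a IHa b IHb|a IHa b IHb|a IH] k;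
  by rewrite ?IH ?IHa ?IHb // inj_eq //; case: eqP.
Qed.

Lemma rename_id f t : {in fv t, f =1 id} -> rename f t = t.
Proof.
elim: t => //= [y|a b IH|a IHa b IHb|a IHa b IHb|a IH] f_id; rewrite ?IH ?IHa ?IHb //;
  try by [rewrite f_id // inE | move=> w wt; rewrite f_id // inE wt ?orbT].
Qed.

Lemma fv_rename f t : fv (rename f t) = f @` fv t.
Proof.
elim: t => /= [n|y|c|a b IH|a IHa b IHb|a IHa b IHb|a IH];
  by rewrite ?imfset0 ?imfset_fset1 ?imfsetU ?IH ?IHa ?IHb.
Qed.

Lemma typing_rename f G t T : injective f -> (forall w, vty (f w) = vty w) ->
  typing G t T -> typing (f @` G) (rename f t) T.
Proof.
move=> f_inj f_ty tyt.
have imfset_disj (A B : ctx) : A `&` B = fset0 -> f @` A `&` f @` B = fset0.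
  by move=> dAB; rewrite -imfsetI ?dAB ?imfset0 // => u v _ _ /f_inj.
elim: tyt => {G t T} /=.
- by move=> G x xG; rewrite imfsetU1 -(f_ty x); apply: T_Var; rewrite mem_imfset.
- by move=> *; apply: T_Const.
- move=> G x t r _ IH; rewrite rename_close // -(f_ty x).
  by apply: T_Lam; rewrite -imfset_fset1 -imfsetU.
- by move=> G1 G2 t s a r dG _ IHt _ IHs; rewrite imfsetU; apply: T_App IHt IHs; apply: imfset_disj.
- by move=> *; apply: T_Pair.
- by move=> G t a r _ IH; apply: T_Fst IH.
- by move=> G t a r _ IH; apply: T_Snd IH.
- move=> G1 G2 t s u a dG _ IHt _ IHs _ IHu; rewrite imfsetU.
  by apply: T_If IHt IHs IHu; apply: imfset_disj.
- move=> G1 G2 t s x y c dG xG yG xy _ IHt _ IHs; rewrite imfsetU !rename_close //.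
  rewrite -(f_ty x) -(f_ty y) in IHt *.
  apply: T_TensElim IHt _; rewrite ?mem_imfset ?inj_eq ?imfset_disj //.
  by rewrite -imfset_fset2 -imfsetU.
- by move=> G t s a r _ IHt _; rewrite imfset0; apply: T_ListElim IHt.
Qed.

Definition swap (y z w : var) : var := if w == y then z else if w == z then y else w.

Lemma swapK y z : involutive (swap y z).
Proof.
move=> w; rewrite /swap.
case: (eqVneq w y) => [->|wy]; first by rewrite eqxx; case: eqVneq.
case: (eqVneq w z) => [->|wz]; first by rewrite eqxx.
by rewrite (negPf wy) (negPf wz).
Qed.

Lemma mem_imfset_swap y z (A : {fset var}) w : (w \in swap y z @` A) = (swap y z w \in A).
Proof. by rewrite -{1}(swapK y z w) mem_imfset //; exact: (inv_inj (swapK y z)). Qed.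

Lemma fv_rename_swap y z t : z \notin fv t ->
  fv (rename (swap y z) t) `<=` (fv t `\ y) `|` [fset z].
Proof.
move=> zt; apply/fsubsetP => w; rewrite fv_rename mem_imfset_swap /swap.
by apply/implyP; fset_solve.
Qed.

Lemma lam_swap y z t : z \notin fv t -> vty z = vty y ->
  lam y t = lam z (rename (swap y z) t).
Proof.
move=> zt zy; have swap_y : swap y z y = z by rewrite /swap eqxx.
rewrite /lam zy -{1}swap_y -rename_close; last exact: (inv_inj (swapK y z)).
by rewrite rename_id // => w; rewrite fv_close /swap => wt; fset_solve.
Qed.

Lemma typing_swap G y z t r : z \notin fv t -> vty z = vty y ->
  typing (G `|` [fset y]) t r -> typing (G `|` [fset z]) (rename (swap y z) t) r.
Proof.
move=> zt zy tyt; have ft := typing_fv tyt; have fr := fv_rename_swap y zt.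
apply: typing_fv_ctx (typing_rename _ _ tyt) _; first exact: (inv_inj (swapK y z)).
  by move=> w; rewrite /swap; case: eqVneq => [->|_]; last case: eqVneq => [->|_].
fset_solve.
Qed.

Fixpoint subst (x : var) (s t : term) : term :=
  match t with
  | FVar y => if y == x then s else t
  | BVar _ | Const _ => t
  | Lam a b => Lam a (subst x s b)
  | Pair a b => Pair (subst x s a) (subst x s b)
  | App a b => App (subst x s a) (subst x s b)
  | Brace a => Brace (subst x s a)
  end.

Fixpoint tsize (t : term) : nat :=
  match t with
  | BVar _ | FVar _ | Const _ => 1
  | Lam _ b | Brace b => (tsize b).+1
  | Pair a b | App a b => (tsize a + tsize b).+1
  end.

Lemma tsize_close k x t : tsize (close_rec k x t) = tsize t.
Proof. by elim: t k => //= [y|a b IH|a IHa b IHb|a IHa b IHb|a IH] k; rewrite ?IH ?IHa ?IHb //; case: ifP. Qed.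

Lemma tsize_rename f t : tsize (rename f t) = tsize t.
Proof. by elim: t => //= [a b IH|a IHa b IHb|a IHa b IHb|a IH]; rewrite ?IH ?IHa ?IHb. Qed.

Lemma subst_fresh x s t : x \notin fv t -> subst x s t = t.
Proof.
elim: t => //= [y|a b IH|a IHa b IHb|a IHa b IHb|a IH]; rewrite ?inE.
- by rewrite eq_sym => /negPf ->.
- by move=> xb; rewrite IH.
- by case/norP => xa xb; rewrite IHa ?IHb.
- by case/norP => xa xb; rewrite IHa ?IHb.
- by move=> xa; rewrite IH.
Qed.

Lemma fv_subst x s t : fv (subst x s t) `<=` (fv t `\ x) `|` fv s.
Proof.
by elim: t => /= [n|y|c|a b IH|a IHa b IHb|a IHa b IHb|a IH];
  try case: eqVneq => [->|] /=; fset_solve.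
Qed.

Lemma subst_close x s k z t : z != x -> z \notin fv s ->
  subst x s (close_rec k z t) = close_rec k z (subst x s t).
Proof.
move=> zx zs; elim: t k => //= [y|a b IH|a IHa b IHb|a IHa b IHb|a IH] k; rewrite ?IH ?IHa ?IHb //.
case: (eqVneq y z) => [->|yz] /=; first by rewrite (negPf zx) /= eqxx.
by case: (eqVneq y x) => [_|yx] /=; rewrite ?close_fresh ?(negPf yz).
Qed.

Lemma fv_subst_disjoint x s t1 t2 : fv t1 `&` fv t2 = fset0 ->
  ((fv t1 `|` fv t2) `\ x) `&` fv s = fset0 ->
  fv (subst x s t1) `&` fv (subst x s t2) = fset0.
Proof.
move=> d12 d; have f1 := fv_subst x s t1; have f2 := fv_subst x s t2.
have [x1|x1] := boolP (x \in fv t1).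
- have x2 : x \notin fv t2 by fset_solve.
  by rewrite (subst_fresh s x2) in f2 *; fset_solve.
- by rewrite (subst_fresh s x1) in f1 *; fset_solve.
Qed.

Lemma subst_lam x s z t : z != x -> z \notin fv s ->
  subst x s (lam z t) = lam z (subst x s t).
Proof. by move=> zx zs; rewrite /lam /= subst_close. Qed.

(* Under a binder the body is renamed away from [x] and [fv s]; the renamed
   body has the same size, which is why [typing_subst] below goes by induction
   on the size of terms rather than on derivations. *)
Lemma typing_subst_lam G y t r x s :
  (forall G' u T, tsize u = tsize t -> typing G' u T -> (fv u `\ x) `&` fv s = fset0 ->
     typing (fv (subst x s u)) (subst x s u) T) ->
  typing (G `|` [fset y]) t r -> (fv (lam y t) `\ x) `&` fv s = fset0 ->
  typing (fv (subst x s (lam y t))) (subst x s (lam y t)) (TArr (vty y) r).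
Proof.
move=> IH tyt; rewrite fv_lam => dts.
have [z zt zy] := fresh_var (fv t `|` fv s `|` [fset x; y]) (vty y).
have zt' : z \notin fv t by fset_solve.
rewrite (lam_swap zt' zy) subst_lam; try fset_solve.
have fr := fv_rename_swap y zt'.
have tyr := IH _ _ _ (tsize_rename _ t) (typing_swap zt' zy tyt).
by rewrite -zy; apply/T_Lam/(typing_fv_ctx (tyr _)); rewrite ?fv_lam; fset_solve.
Qed.

Lemma typing_subst G D t T x s :
  typing G t T -> typing D s (vty x) -> (fv t `\ x) `&` fv s = fset0 ->
  typing (fv (subst x s t)) (subst x s t) T.
Proof.
move=> + tys; have [n] := ubnP (tsize t); elim: n => // n IHn in G t T *.
move=> t_n tyt; case: tyt t_n => {G t T}.
- move=> G y yG _ _ /=; case: eqVneq => [->|_].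
    exact: typing_fv_ctx tys (fsubset_refl _).
  exact: typing_fv_ctx (T_Var yG) (fsubset_refl _).
- by move=> *; apply: T_Const.
- move=> G y t r tyt /=; rewrite tsize_close => t_n.
  by apply: typing_subst_lam tyt => G' u T' u_t; apply: IHn; rewrite u_t.
- move=> G1 G2 t1 t2 a r dG ty1 ty2 /= t_n dts.
  have f1 := typing_fv ty1; have f2 := typing_fv ty2.
  apply: typing_App_fv (IHn _ _ _ _ ty1 _) (IHn _ _ _ _ ty2 _) _ (fsubset_refl _);
    try lia; try fset_solve.
  by apply: fv_subst_disjoint; fset_solve.
- move=> G t1 t2 a r ty1 ty2 /= t_n dts.
  by apply: T_Pair; [apply: typing_fv_ctx (IHn _ _ _ _ ty1 _) _
                    | apply: typing_fv_ctx (IHn _ _ _ _ ty2 _) _]; try lia; fset_solve.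
- move=> G t1 a r ty1 /= t_n dts.
  by apply: T_Fst; apply: typing_fv_ctx (IHn _ _ _ _ ty1 _) _; try lia; fset_solve.
- move=> G t1 a r ty1 /= t_n dts.
  by apply: T_Snd; apply: typing_fv_ctx (IHn _ _ _ _ ty1 _) _; try lia; fset_solve.
- move=> G1 G2 t0 s1 s2 a dG ty0 ty1 ty2 /= t_n dts.
  have f0 := typing_fv ty0; have f1 := typing_fv ty1; have f2 := typing_fv ty2.
  apply: typing_If_fv (IHn _ _ _ _ ty0 _) (IHn _ _ _ _ ty1 _) (IHn _ _ _ _ ty2 _) _ (fsubset_refl _);
    try lia; try fset_solve.
  by apply: (@fv_subst_disjoint _ _ _ (Pair s1 s2)); fset_solve.
- move=> G1 G2 t0 u y1 y2 c dG y1G y2G y12 ty0 tyu t_n dts.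
  have tyL : typing G2 (lam y1 (lam y2 u)) (TArr (vty y1) (TArr (vty y2) c)).
    by apply/T_Lam/T_Lam/(typing_fv_ctx tyu); have := typing_fv tyu; fset_solve.
  have f0 := typing_fv ty0; have fL := typing_fv tyL.
  move: t_n dts; rewrite /= !tsize_close => t_n dts.
  apply: typing_TensElim_fv (IHn _ _ _ _ ty0 _) (IHn _ _ _ _ tyL _) _ (fsubset_refl _);
    rewrite /= ?tsize_close; try lia; try fset_solve.
  by apply: (@fv_subst_disjoint _ _ _ (lam y1 (lam y2 u))); fset_solve.
- move=> G t0 s0 a r ty0 tys0 /= t_n dts.
  have x_s0 : x \notin fv s0 by have := typing_fv tys0; fset_solve.
  rewrite (subst_fresh s x_s0); apply: T_ListElim tys0.
  by apply: typing_fv_ctx (IHn _ _ _ _ ty0 _) _; try lia; fset_solve.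
Qed.

(** * Local closure *)

Fixpoint lc_at (k : nat) (t : term) : bool :=
  match t with
  | BVar n => n < k
  | FVar _ | Const _ => true
  | Lam _ b => lc_at k.+1 b
  | Pair a b | App a b => lc_at k a && lc_at k b
  | Brace a => lc_at k a
  end.

Lemma lc_close k x t : lc_at k t -> lc_at k.+1 (close_rec k x t).
Proof.
elim: t k => /= [n|y|c|a b IH|a IHa b IHb|a IHa b IHb|a IH] k //.
- exact: ltnW.
- by case: ifP => /=.
- exact: IH.
- by case/andP => /IHa -> /IHb ->.
- by case/andP => /IHa -> /IHb ->.
- exact: IH.
Qed.

Lemma typing_lc G t T : typing G t T -> lc_at 0 t.
Proof.
elim=> {G t T} //= [G x t r _|G1 G2 t s a r _ _ -> _ ->|G t s a r _ -> _ ->|G t a r _ ->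
  |G t a r _ ->|G1 G2 t s u a _ _ -> _ -> _ ->|G1 G2 t s x y c _ _ _ _ _ -> _|G t s a r _ -> _ ->] //.
- exact: lc_close.
- by move=> lc_s; do 2 apply: lc_close.
Qed.

Lemma open_close k x s t : lc_at k t -> open_rec k s (close_rec k x t) = subst x s t.
Proof.
elim: t k => /= [n|y|c|a b IH|a IHa b IHb|a IHa b IHb|a IH] k.
- by move=> n_k; rewrite (ltn_eqF n_k).
- by case: ifP => //= _; rewrite eqxx.
- by [].
- by move=> lc_b; rewrite IH.
- by case/andP => lc_a lc_b; rewrite IHa ?IHb.
- by case/andP => lc_a lc_b; rewrite IHa ?IHb.
- by move=> lc_a; rewrite IH.
Qed.

Lemma open_lc k t u : lc_at k t -> forall j, k <= j -> open_rec j u t = t.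
Proof.
elim: t k => /= [n|y|c|a b IH|a IHa b IHb|a IHa b IHb|a IH] k //.
- by move=> n_k j k_j; case: eqP => // n_j; rewrite n_j ltnNge k_j in n_k.
- by move=> lc_b j k_j; rewrite (IH k.+1).
- by case/andP => lc_a lc_b j k_j; rewrite (IHa k) ?(IHb k).
- by case/andP => lc_a lc_b j k_j; rewrite (IHa k) ?(IHb k).
- by move=> lc_a j k_j; rewrite (IH k).
Qed.

Lemma open2_open k t s u : lc_at 0 t ->
  open2_rec k t s u = open_rec k s (open_rec k.+1 t u).
Proof.
move=> lc_t; elim: u k => /= [n|y|c|a b IH|a IHa b IHb|a IHa b IHb|a IH] k //.
- by case: eqP => //= _; rewrite (open_lc _ lc_t).
- by rewrite IH.
- by rewrite IHa IHb.
- by rewrite IHa IHb.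
- by rewrite IH.
Qed.

(** * Subject reduction *)

Definition arrow_typed (t : term) :=
  forall G T, typing G t T -> exists a r, T = TArr a r.

Definition uniquely_typed (t : term) (T : ty) :=
  forall G T', typing G t T' -> T' = T.

Lemma typing_App_arrowE G t s T : arrow_typed t -> typing G (App t s) T ->
  exists G1 G2 a, [/\ G = G1 `|` G2, G1 `&` G2 = fset0,
                    typing G1 t (TArr a T) & typing G2 s a].
Proof.
move=> tA /typing_AppE [G1 G2 a -> dG tyt tys|r _|a _|G1 G2 s1 s2 _ _ _|G1 G2 x y u _ _ _ _ _ _
  |s0 a r _ _]; first by exists G1, G2, a.
all: by move/tA => [? [? []]].
Qed.

Lemma arrow_typed_Lam a b : arrow_typed (Lam a b).
Proof. by move=> G T /typing_LamE [x [t [r [_ _ -> _]]]]; exists (vty x), r. Qed.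

Lemma uniquely_typed_Const c : uniquely_typed (Const c) (const_ty c).
Proof. by move=> G T /typing_ConstE. Qed.

Lemma typing_App_uniqueE G t s A R T : uniquely_typed t (TArr A R) ->
  typing G (App t s) T -> T = R /\ exists G1 G2, [/\ G = G1 `|` G2, G1 `&` G2 = fset0,
                                               typing G1 t (TArr A R) & typing G2 s A].
Proof.
move=> tT; have tA : arrow_typed t by move=> G' T' /tT ->; exists A, R.
case/(typing_App_arrowE tA) => G1 [G2 [a [-> dG tyt tys]]].
by case: (tT _ _ tyt) => ? ?; subst; split=> //; exists G1, G2.
Qed.

Lemma uniquely_typed_App t s A R : uniquely_typed t (TArr A R) -> uniquely_typed (App t s) R.
Proof. by move=> tT G T /(typing_App_uniqueE tT) []. Qed.

Lemma typing_ListElimE G M t A T : uniquely_typed M (TList A) ->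
  typing G (App M (Brace t)) T -> exists R, [/\ T = TArr R R, typing G M (TList A)
                                            & typing fset0 t (TArr TDiamond (TArr A (TArr R R)))].
Proof.
move=> MT /typing_AppE [G1 G2 a _ _ /MT []|? []|? []|? ? ? ? []|? ? ? ? ? []|s0 a r [->] -> tyM] //.
by case: (MT _ _ tyM) => ea tys0; subst a; exists r.
Qed.

Lemma arrow_typed_ListElim M t A : uniquely_typed M (TList A) -> arrow_typed (App M (Brace t)).
Proof. by move=> MT G T /(typing_ListElimE MT) [R [-> _ _]]; exists R, R. Qed.

Lemma typing_beta G a b s T : typing G (App (Lam a b) s) T -> typing G (open_rec 0 s b) T.
Proof.
case/(typing_App_arrowE (@arrow_typed_Lam a b)) => G1 [G2 [a' [-> dG tyL tys]]].
have [x [t [r [_ -> ET tyt]]]] := typing_LamE tyL; case: ET => ? ?; subst.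
rewrite (open_close _ _ (typing_lc tyt)).
have ft := typing_fv tyt; have fs := typing_fv tys.
apply: typing_fv_ctx (typing_subst tyt tys _) _; first by fset_solve.
by have := fv_subst x s t; fset_solve.
Qed.

Lemma typing_fst G t s T : typing G (App (Pair t s) (Const Ctt)) T -> typing G t T.
Proof.
by case/typing_AppE => [G1 G2 a _ _ /typing_PairE [? [? []]]|r _ /typing_PairE [a [r' [[-> _] ? _]]]
  |? []|? ? ? ? []|? ? ? ? ? []|? ? ? []].
Qed.

Lemma typing_snd G t s T : typing G (App (Pair t s) (Const Cff)) T -> typing G s T.
Proof.
by case/typing_AppE => [G1 G2 a _ _ /typing_PairE [? [? []]]|? []|a _ /typing_PairE [a' [r [[_ ->] _ ?]]]
  |? ? ? ? []|? ? ? ? ? []|? ? ? []].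
Qed.

Lemma typing_If_branches G b t s T : uniquely_typed b TBool ->
  typing G (App b (Pair t s)) T -> typing G t T /\ typing G s T.
Proof.
move=> bT; case/typing_AppE => [G1 G2 a _ _ /bT []|? []|? []|G1 G2 s1 s2 [-> ->] -> _ _ tyt tys
  |? ? ? ? ? []|? ? ? []] //.
by split; apply: typing_weaken (fsubsetUr _ _).
Qed.

Lemma typing_tens G a r t s u T :
  typing G (App (App (App (Const (Ctens a r)) t) s) (Lam a (Lam r u))) T ->
  typing G (open2_rec 0 t s u) T.
Proof.
have C0 := @uniquely_typed_Const (Ctens a r).
have C1 := @uniquely_typed_App _ t _ _ C0; have C2 := @uniquely_typed_App _ s _ _ C1.
case/typing_AppE => [G1 G2 b _ _ /C2 []|? []|? []|? ? ? ? []
  |G1 G2 x y u' EL -> dG _ _ _ tyM tyu|? ? ? []] //.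
have [_ [Gts [Gs [EG1 ds tyts tys]]]] := typing_App_uniqueE C1 tyM.
have [_ [Gc [Gt [EGts dt _ tyt]]]] := typing_App_uniqueE C0 tyts; subst G1 Gts.
case: (C2 _ _ tyM) => xa yr; subst a r.
have tyL : typing G2 (lam x (lam y u')) (TArr (vty x) (TArr (vty y) T)).
  by apply/T_Lam/T_Lam/(typing_fv_ctx tyu); have := typing_fv tyu; fset_solve.
have tyLt : typing (G2 `|` Gt) (App (lam x (lam y u')) t) (TArr (vty y) T).
  by apply: T_App tyL tyt; fset_solve.
rewrite -EL in tyLt; have /= tyL' := typing_beta tyLt.
have tyLts : typing ((G2 `|` Gt) `|` Gs) (App (Lam (vty y) (open_rec 1 t u)) s) T.
  by apply: T_App tyL' tys; fset_solve.
rewrite open2_open ?(typing_lc tyt) //; apply: typing_weaken (typing_beta tyLts) _.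
fset_solve.
Qed.

Lemma typing_nil G a t s T :
  typing G (App (App (Const (Cnil a)) (Brace t)) s) T -> typing G s T.
Proof.
have nilT := @uniquely_typed_Const (Cnil a).
case/(typing_App_arrowE (arrow_typed_ListElim nilT)) => G1 [G2 [b [-> _ tyN tys]]].
have [R [[eb eT] _ _]] := typing_ListElimE nilT tyN; subst b T.
exact: typing_weaken tys (fsubsetUr _ _).
Qed.

Lemma typing_cons G a d e l t s T :
  typing G (App (App (App (App (App (Const (Ccons a)) d) e) l) (Brace t)) s) T ->
  typing G (App (App (App t d) e) (App (App l (Brace t)) s)) T.
Proof.
have C0 := @uniquely_typed_Const (Ccons a).
have C1 := @uniquely_typed_App _ d _ _ C0; have C2 := @uniquely_typed_App _ e _ _ C1.
have C3 := @uniquely_typed_App _ l _ _ C2.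
case/(typing_App_arrowE (arrow_typed_ListElim C3)) => G1 [G2 [b [-> dG tyMt tys]]].
have [R [[eb eT] tyM tyt]] := typing_ListElimE C3 tyMt; subst b T.
have [_ [Gde [Gl [EG1 dl tyde tyl]]]] := typing_App_uniqueE C2 tyM.
have [_ [Gd' [Ge [EGde de tyd' tye]]]] := typing_App_uniqueE C1 tyde.
have [_ [Gc [Gd [EGd dd _ tyd]]]] := typing_App_uniqueE C0 tyd'; subst.
have ty_td : typing (fset0 `|` Gd) (App t d) (TArr a (TArr R R)) := T_App (fset0I Gd) tyt tyd.
have ty_tde : typing ((fset0 `|` Gd) `|` Ge) (App (App t d) e) (TArr R R).
  by apply: T_App ty_td tye; fset_solve.
have ty_lts : typing (Gl `|` G2) (App (App l (Brace t)) s) R.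
  by apply: T_App (T_ListElim tyl tyt) tys; fset_solve.
by apply: typing_weaken (T_App _ ty_tde ty_lts) _; fset_solve.
Qed.

Lemma conv_typing G t t' T : conv t t' -> typing G t T -> typing G t' T.
Proof.
case=> {t t'} [a b s|t s|t s|t s|t s|a r t s u|a t s|a d e l t s _].
- exact: typing_beta.
- exact: typing_fst.
- exact: typing_snd.
- by case/(typing_If_branches (@uniquely_typed_Const Ctt)).
- by case/(typing_If_branches (@uniquely_typed_Const Cff)).
- exact: typing_tens.
- exact: typing_nil.
- exact: typing_cons.
Qed.

Lemma typing_App_congr_l G t t' s T : (forall G T, typing G t T -> typing G t' T) ->
  typing G (App t s) T -> typing G (App t' s) T.
Proof.
move=> tt'; case/typing_AppE => [G1 G2 a -> dG /tt' tyt tys|r -> /tt' tyt|a -> /tt' tyt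
  |G1 G2 s1 s2 -> -> dG /tt' tyt ty1 ty2|G1 G2 x y u -> -> dG xG yG xy /tt' tyt tyu
  |s0 a r -> -> /tt' tyt tys0].
- exact: T_App dG tyt tys.
- exact: T_Fst tyt.
- exact: T_Snd tyt.
- exact: T_If dG tyt ty1 ty2.
- exact: T_TensElim dG xG yG xy tyt tyu.
- exact: T_ListElim tyt tys0.
Qed.

Lemma typing_App_congr_r G t s1 s2 s' T :
  (forall G T, typing G (App s1 s2) T -> typing G s' T) ->
  typing G (App t (App s1 s2)) T -> typing G (App t s') T.
Proof.
move=> ss'; case/typing_AppE => [G1 G2 a -> dG tyt /ss' tys|? []|? []|? ? ? ? []|? ? ? ? ? []
  |? ? ? []] //.
exact: T_App dG tyt tys.
Qed.

Lemma red_App t t' : red t t' -> exists a b, t = App a b.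
Proof. by case=> [? ? []|? ? ? _|? ? ? _] *; do 2 eexists. Qed.

Unset Implicit Arguments.

Theorem lemma3p5 (G : ctx) (t t' : term) (tau : ty) :
  typing G t tau -> red t t' -> typing G t' tau.
Proof.
move=> tyt rt; elim: rt G tau tyt => {t t'} [t t' tt' G T|t t' s _ IH G T|t s s' rs IH G T].
- exact: conv_typing.
- exact: typing_App_congr_l.
- by have [s1 [s2 Es]] := red_App rs; subst s; apply: typing_App_congr_r.
Qed.
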